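(* For $\beta\in(0,\tfrac14)$ and $\tau>0$, write $S=\sinh(2\tau)$, $C=\cosh(2\tau)$ and define $$\lambda_1^-(\beta,\tau)=\frac1\beta\Big[\frac{6S(1+C)}{(C-1)^2}-6\sqrt{\frac{S^2(1+C)^2}{(C-1)^4}-2\beta\frac{\cosh(4\tau)-C}{(C-1)^2}}\Big],\qquad \lambda_0^+(\beta,\tau)=\frac4\beta\,\frac{S}{1-C+\tau S}.$$ Then for every $\beta\in(0,\tfrac14)$ there are values $\tau^-,\tau^*,\tau^+>0$ such that $\lambda_0^+>\lambda_1^-$ at $\tau=\tau^-$, $\lambda_1^->\lambda_0^+$ at $\tau=\tau^+$, and $\lambda_1^-=\lambda_0^+$ at $\tau=\tau^*$.
   Context: These are, with $\beta=\alpha(1-\alpha)$, the smaller root of the $\ell=1$ eigenvalue equation and the positive $\ell=0$ eigenvalue for the fourth-order Steklov-type problem ($P_gu=0$, $B^1_gu=0$, $B^3_gu=\lambda u$) on the annulus $[0,\tau]\times\mathbb S^3$ with a radial conformally flat metric normalized so that $e^{3f(0)}=\alpha$, $e^{3f(\tau)}=1-\alpha$. *)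

From Stdlib Require Import Reals.
Open Scope R_scope.

Definition lam1m (beta tau : R) : R :=
  let S := sinh (2 * tau) in
  let C := cosh (2 * tau) in
  / beta * (6 * S * (1 + C) / (C - 1) ^ 2
            - 6 * sqrt (S ^ 2 * (1 + C) ^ 2 / (C - 1) ^ 4
                        - 2 * beta * (cosh (4 * tau) - C) / (C - 1) ^ 2)).

Definition lam0p (beta tau : R) : R :=
  let S := sinh (2 * tau) in
  let C := cosh (2 * tau) in
  4 / beta * (S / (1 - C + tau * S)).

From Stdlib Require Import Reals Lra Psatz.
From Coquelicot Require Import Coquelicot.
Open Scope R_scope.

(** With k = coth τ, the double-angle formulas turn both eigenvalues into
    elementary functions of k:
      λ₁⁻ = (6/β) (k³ − √(k⁶ − β(3k²+1))) = 6(3k²+1) / (k³ + √(k⁶ − β(3k²+1))),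
      λ₀⁺ = (4/β) k / (τk − 1),
    where k > 1 and τk > 1 for τ > 0.  The rationalized form gives
    9/k ≤ λ₁⁻ ≤ 24/k, while λ₀⁺ > 4/(βτ).  Hence λ₀⁺ > λ₁⁻ at τ = 1/2, and for
    τ = 1 + 2/β, where k ≤ 2, λ₀⁺ ≤ 2k ≤ 4 < 9/2 ≤ λ₁⁻.  Both sides are
    continuous in τ > 0, so they cross in between. *)

Definition coth (x : R) : R := cosh x / sinh x.

Lemma exp_double x : exp (2 * x) = exp x ^ 2.
Proof. replace (2 * x) with (x + x) by ring. rewrite exp_plus. ring. Qed.

Lemma sinh_double x : sinh (2 * x) = 2 * sinh x * cosh x.
Proof.
  unfold sinh, cosh. rewrite !exp_Ropp, exp_double. field. apply exp_neq_0.
Qed.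

Lemma cosh_double_add1 x : 1 + cosh (2 * x) = 2 * cosh x ^ 2.
Proof.
  unfold cosh. rewrite !exp_Ropp, exp_double. field. apply exp_neq_0.
Qed.

Lemma cosh_double_sub1 x : cosh (2 * x) - 1 = 2 * sinh x ^ 2.
Proof.
  unfold sinh, cosh. rewrite !exp_Ropp, exp_double. field. apply exp_neq_0.
Qed.

Lemma cosh_quadruple_sub_double x :
  cosh (4 * x) - cosh (2 * x) = 2 * sinh x ^ 2 * (3 * cosh x ^ 2 + sinh x ^ 2).
Proof.
  replace (4 * x) with (2 * (2 * x)) by ring.
  unfold sinh, cosh. rewrite !exp_Ropp, !exp_double. field. apply exp_neq_0.
Qed.

Lemma sinh_pos x : 0 < x -> 0 < sinh x.
Proof. intro Hx. rewrite <- sinh_0. apply sinh_lt, Hx. Qed.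

Lemma sinh_lt_mul_cosh x : 0 < x -> sinh x < x * cosh x.
Proof.
  intro Hx.
  destruct (MVT_cor2 (fun y => y * cosh y - sinh y) (fun y => y * sinh y) 0 x Hx)
    as [c [Hc [Hc0 Hcx]]].
  - intros c _.
    replace (c * sinh c) with (1 * cosh c + c * sinh c - cosh c) by ring.
    apply derivable_pt_lim_minus; [apply derivable_pt_lim_mult|].
    + apply derivable_pt_lim_id.
    + apply derivable_pt_lim_cosh.
    + apply derivable_pt_lim_sinh.
  - rewrite sinh_0, cosh_0 in Hc.
    pose proof (sinh_pos c Hc0).
    assert (0 < c * sinh c * (x - 0)) by (apply Rmult_lt_0_compat; [apply Rmult_lt_0_compat|]; lra).
    lra.
Qed.

Lemma coth_gt_1 x : 0 < x -> 1 < coth x.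
Proof.
  intro Hx. pose proof (sinh_pos x Hx). unfold coth.
  apply Rlt_div_r; [lra|]. rewrite Rmult_1_l.
  unfold sinh, cosh. pose proof (exp_pos (- x)). lra.
Qed.

Lemma mul_coth_gt_1 x : 0 < x -> 1 < x * coth x.
Proof.
  intro Hx. pose proof (sinh_pos x Hx). pose proof (sinh_lt_mul_cosh x Hx).
  unfold coth. rewrite Rmult_div_assoc.
  apply Rlt_div_r; lra.
Qed.

Lemma coth_le_2 x : 1 <= x -> coth x <= 2.
Proof.
  intro Hx. pose proof (sinh_pos x ltac:(lra)). unfold coth.
  apply Rle_div_l; [lra|].
  assert (H3 : 3 <= exp x ^ 2).
  { rewrite <- exp_double. pose proof (exp_ineq1_le (2 * x)). lra. }
  unfold sinh, cosh. rewrite exp_Ropp.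
  pose proof (exp_pos x).
  apply (Rmult_le_reg_r (exp x)); [lra|].
  field_simplify; lra.
Qed.

Definition lam1m_coth (b k : R) : R := 6 / b * (k ^ 3 - sqrt (k ^ 6 - b * (3 * k ^ 2 + 1))).

Definition lam0p_coth (b t k : R) : R := 4 / b * (k / (t * k - 1)).

Lemma lam1m_leading_coth t : 0 < t ->
  sinh (2 * t) * (1 + cosh (2 * t)) / (cosh (2 * t) - 1) ^ 2 = coth t ^ 3.
Proof.
  intro Ht. pose proof (sinh_pos t Ht).
  rewrite sinh_double, cosh_double_add1, cosh_double_sub1. unfold coth. field. lra.
Qed.

Lemma lam1m_radicand_coth b t : 0 < t ->
  sinh (2 * t) ^ 2 * (1 + cosh (2 * t)) ^ 2 / (cosh (2 * t) - 1) ^ 4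
  - 2 * b * (cosh (4 * t) - cosh (2 * t)) / (cosh (2 * t) - 1) ^ 2
  = coth t ^ 6 - b * (3 * coth t ^ 2 + 1).
Proof.
  intro Ht. pose proof (sinh_pos t Ht).
  rewrite cosh_quadruple_sub_double, sinh_double, cosh_double_add1, cosh_double_sub1.
  unfold coth. field. lra.
Qed.

Lemma lam0p_ratio_coth t : 0 < t ->
  sinh (2 * t) / (1 - cosh (2 * t) + t * sinh (2 * t)) = coth t / (t * coth t - 1).
Proof.
  intro Ht. pose proof (sinh_pos t Ht). pose proof (sinh_lt_mul_cosh t Ht).
  replace (1 - cosh (2 * t)) with (- (cosh (2 * t) - 1)) by ring.
  rewrite sinh_double, cosh_double_sub1. unfold coth.
  field. repeat split; nra.
Qed.

Lemma lam1m_eq_coth b t : b <> 0 -> 0 < t -> lam1m b t = lam1m_coth b (coth t).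
Proof.
  intros Hb Ht. pose proof (sinh_pos t Ht).
  unfold lam1m, lam1m_coth. cbv zeta.
  rewrite <- (lam1m_radicand_coth b t Ht), <- (lam1m_leading_coth t Ht), cosh_double_sub1.
  field. split; [lra | exact Hb].
Qed.

Lemma lam0p_eq_coth b t : 0 < t -> lam0p b t = lam0p_coth b t (coth t).
Proof.
  intro Ht. unfold lam0p, lam0p_coth. cbv zeta. rewrite lam0p_ratio_coth; auto.
Qed.

Lemma lam1m_radicand_pos b k : b <= 1 / 4 -> 1 < k -> 0 < k ^ 6 - b * (3 * k ^ 2 + 1).
Proof.
  intros Hb Hk.
  assert (Hk2 : 1 < k ^ 2) by nra.
  assert (k ^ 2 < k ^ 6).
  { replace (k ^ 6) with (k ^ 2 * (k ^ 2 * k ^ 2)) by ring.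
    assert (1 < k ^ 2 * k ^ 2) by nra. nra. }
  assert (b * (3 * k ^ 2 + 1) <= (3 * k ^ 2 + 1) / 4) by nra.
  lra.
Qed.

Lemma lam1m_coth_rationalized b k : 0 < b <= 1 / 4 -> 1 < k ->
  lam1m_coth b k = 6 * (3 * k ^ 2 + 1) / (k ^ 3 + sqrt (k ^ 6 - b * (3 * k ^ 2 + 1))).
Proof.
  intros Hb Hk.
  pose proof (lam1m_radicand_pos b k (proj2 Hb) Hk) as HA.
  pose proof (sqrt_pos (k ^ 6 - b * (3 * k ^ 2 + 1))).
  pose proof (sqrt_sqrt _ (Rlt_le _ _ HA)) as Hsq.
  assert (1 < k ^ 3) by (simpl; nra).
  unfold lam1m_coth. field_simplify_eq; lra.
Qed.

Lemma lam1m_coth_bounds b k : 0 < b <= 1 / 4 -> 1 < k ->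
  9 / k <= lam1m_coth b k <= 24 / k.
Proof.
  intros Hb Hk. rewrite lam1m_coth_rationalized by assumption.
  pose proof (lam1m_radicand_pos b k (proj2 Hb) Hk) as HA.
  set (s := sqrt (k ^ 6 - b * (3 * k ^ 2 + 1))).
  assert (Hs0 : 0 <= s) by apply sqrt_pos.
  assert (Hss : s * s = k ^ 6 - b * (3 * k ^ 2 + 1)) by (apply sqrt_sqrt; lra).
  assert (Hk3 : 1 < k ^ 3) by (simpl; nra).
  assert (Hs3 : s <= k ^ 3) by nra.
  split.
  - apply (Rmult_le_reg_r (k * (k ^ 3 + s))); [nra|].
    field_simplify; nra.
  - apply (Rmult_le_reg_r (k * (k ^ 3 + s))); [nra|].
    field_simplify; nra.
Qed.

Lemma lam0p_coth_gt b t k : 0 < b -> 0 < t -> 1 < t * k -> 4 / (b * t) < lam0p_coth b t k.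
Proof.
  intros Hb Ht Htk. unfold lam0p_coth.
  assert (0 < b * t) by nra.
  apply (Rmult_lt_reg_r (b * t * (t * k - 1))); [nra|].
  field_simplify; nra.
Qed.

Lemma lam0p_coth_le b t k : 0 < b -> 1 <= k -> 1 < t ->
  lam0p_coth b t k <= 4 * k / (b * (t - 1)).
Proof.
  intros Hb Hk Ht. unfold lam0p_coth.
  assert (0 < b * (t - 1)) by nra.
  assert (1 < t * k) by nra.
  apply (Rmult_le_reg_r (b * (t - 1) * (t * k - 1))); [nra|].
  field_simplify; nra.
Qed.

Lemma lam1m_lt_lam0p_half b : 0 < b <= 1 / 4 -> lam1m b (1 / 2) < lam0p b (1 / 2).
Proof.
  intro Hb. assert (Ht : 0 < 1 / 2) by lra.
  rewrite lam1m_eq_coth, lam0p_eq_coth by lra.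
  pose proof (coth_gt_1 _ Ht) as Hk.
  pose proof (lam1m_coth_bounds b _ Hb Hk) as [_ Hup].
  pose proof (lam0p_coth_gt b _ _ (proj1 Hb) Ht (mul_coth_gt_1 _ Ht)) as Hlow.
  assert (24 / coth (1 / 2) < 24).
  { apply (Rmult_lt_reg_r (coth (1 / 2))); [lra|]. field_simplify; lra. }
  assert (24 < 4 / (b * (1 / 2))).
  { apply (Rmult_lt_reg_r b); [lra|]. field_simplify; lra. }
  lra.
Qed.

Lemma lam0p_lt_lam1m_far b : 0 < b <= 1 / 4 -> lam0p b (1 + 2 / b) < lam1m b (1 + 2 / b).
Proof.
  intro Hb. set (t := 1 + 2 / b).
  assert (H2b : 0 < 2 / b) by (apply Rdiv_lt_0_compat; lra).
  assert (Ht : 1 < t) by (unfold t; lra).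
  rewrite lam1m_eq_coth, lam0p_eq_coth by lra.
  pose proof (coth_gt_1 t ltac:(lra)) as Hk.
  pose proof (coth_le_2 t ltac:(lra)) as Hk2.
  pose proof (lam1m_coth_bounds b _ Hb Hk) as [Hlow _].
  pose proof (lam0p_coth_le b t (coth t) (proj1 Hb) ltac:(lra) Ht) as Hup.
  replace (4 * coth t / (b * (t - 1))) with (2 * coth t) in Hup by (unfold t; field; lra).
  assert (9 / 2 <= 9 / coth t).
  { apply Rmult_le_compat_l; [lra|]. apply Rinv_le_contravar; lra. }
  lra.
Qed.

Definition lam_gap_coth (b t : R) : R := lam1m_coth b (coth t) - lam0p_coth b t (coth t).

Lemma lam_gap_coth_continuous b t : b <= 1 / 4 -> 0 < t -> continuity_pt (lam_gap_coth b) t.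
Proof.
  intros Hb Ht.
  pose proof (sinh_pos t Ht). pose proof (mul_coth_gt_1 t Ht).
  pose proof (lam1m_radicand_pos b (coth t) Hb (coth_gt_1 t Ht)).
  apply derivable_continuous_pt, ex_derive_Reals_0.
  unfold lam_gap_coth, lam1m_coth, lam0p_coth, coth in *.
  auto_derive. unfold Rdiv in *. repeat split; lra.
Qed.

Lemma lam1m_eq_lam0p_between b t1 t2 : 0 < b <= 1 / 4 -> 0 < t1 < t2 ->
  lam1m b t1 < lam0p b t1 -> lam0p b t2 < lam1m b t2 ->
  exists t, t1 <= t <= t2 /\ lam1m b t = lam0p b t.
Proof.
  intros Hb Ht H1 H2.
  assert (Hgap : forall t, 0 < t -> lam1m b t - lam0p b t = lam_gap_coth b t).
  { intros t Ht0. rewrite lam1m_eq_coth, lam0p_eq_coth by lra. reflexivity. }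
  destruct (Ranalysis5.IVT_interv (lam_gap_coth b) t1 t2) as [t [Ht12 Hzero]].
  - intros t Ht12. apply lam_gap_coth_continuous; lra.
  - lra.
  - rewrite <- Hgap by lra. lra.
  - rewrite <- Hgap by lra. lra.
  - exists t. split; [exact Ht12|].
    rewrite <- Hgap in Hzero by lra. lra.
Qed.

Theorem proposition5p6 :
  forall beta : R, 0 < beta < 1 / 4 ->
  exists tau_m tau_s tau_p : R,
    0 < tau_m /\ 0 < tau_s /\ 0 < tau_p /\
    lam0p beta tau_m > lam1m beta tau_m /\
    lam1m beta tau_p > lam0p beta tau_p /\
    lam1m beta tau_s = lam0p beta tau_s.
Proof.
  intros b Hb.
  assert (Hb' : 0 < b <= 1 / 4) by lra.
  assert (Horder : 1 / 2 < 1 + 2 / b)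
    by (pose proof (Rdiv_lt_0_compat 2 b ltac:(lra) ltac:(lra)); lra).
  pose proof (lam1m_lt_lam0p_half b Hb') as Hnear.
  pose proof (lam0p_lt_lam1m_far b Hb') as Hfar.
  destruct (lam1m_eq_lam0p_between b (1 / 2) (1 + 2 / b) Hb' ltac:(lra) Hnear Hfar)
    as [t [Ht Heq]].
  exists (1 / 2), t, (1 + 2 / b).
  repeat split; lra.
Qed.
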